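(* Let $H = \{h_0 = 0_H, h_1, \dots, h_{t-1}\}$ be a finite abelian group with a fixed enumeration of its elements, and let $\boldsymbol{\lambda} = (\lambda_0,\dots,\lambda_{t-1})$ be a sequence of nonnegative integers. Suppose that every non-zero sum subset of type $\boldsymbol{\lambda}$ of $(\mathbb{Z} \times H) \setminus \{0_{\mathbb{Z}\times H}\}$ is sequenceable. Then for every $n \geq 2$, every non-zero sum subset of type $\boldsymbol{\lambda}$ of $(\mathbb{Z}^n \times H) \setminus \{0_{\mathbb{Z}^n\times H}\}$ is sequenceable.
   Context: For a finite subset $S$ of an abelian group with $|S| = k$, an ordering $(x_1,\dots,x_k)$ of $S$ has partial sums $(y_0,\dots,y_k)$ with $y_0 = 0$, $y_i = x_1+\cdots+x_i$. It is a sequencing if the $y_i$ are pairwise distinct, and a rotational sequencing if they are pairwise distinct except that $y_k = y_0 = 0$; $S$ is sequenceable if it has one or the other. $S$ is non-zero sum if the sum of its elements is nonzero. For an abelian group $G$ and a finite abelian group $H = \{h_0=0_H,\dots,h_{t-1}\}$, the type of a finite subset $S \subseteq G \times H$ is $(\lambda_0,\dots,\lambda_{t-1})$ where $\lambda_i$ is the number of elements of $S$ whose $H$-coordinate equals $h_i$. *)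

From HB Require Import structures.
From mathcomp Require Import all_boot all_order all_algebra.
Set Implicit Arguments. Unset Strict Implicit. Unset Printing Implicit Defensive.
Import GRing.Theory.
Local Open Scope ring_scope.

Section Seqs.
Variable G : zmodType.

Definition partial_sums (s : seq G) : seq G := 0 :: scanl +%R 0 s.

Definition is_sequencing (s : seq G) : bool := uniq (partial_sums s).

Definition is_rot_sequencing (s : seq G) : bool :=
  [&& (0 < size s)%N, nth 0 (partial_sums s) (size s) == 0
    & uniq (take (size s) (partial_sums s))].

(* A finite subset S (a duplicate-free list) is sequenceable if some
   ordering of it is a sequencing or a rotational sequencing. *)
Definition sequenceable (S : seq G) : Prop :=
  exists s : seq G, perm_eq s S /\ (is_sequencing s \/ is_rot_sequencing s).

Definition nonzero_sum (S : seq G) : bool := \sum_(x <- S) x != 0.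
End Seqs.

Definition has_type (G : zmodType) (H : zmodType) (t : nat)
  (h : 'I_t -> H) (lam : 'I_t -> nat) (S : seq (G * H)) : Prop :=
  forall i : 'I_t, count (fun x => x.2 == h i) S = lam i.

From HB Require Import structures.
From mathcomp Require Import all_boot all_order all_algebra.
Import GRing.Theory Num.Theory.
Local Open Scope ring_scope.

(* The map (v, a) |-> (sum_j v_j c^j, a) from Z^n x H to Z x H is a group
   homomorphism fixing the H-coordinate, so it preserves types.  Avoiding the
   finitely many roots of the nonzero polynomials sum_j (u_j - w_j) X^j, for
   u != w among 0, the sum of S and the elements of S, it is injective on these
   points, so the image of S is again a non-zero sum subset of (Z x H) \ {0}
   of the same type.  An additive map carries partial sums to partial sums, so
   a sequencing of the image pulls back to one of S; a rotational sequencing of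
   the image would have sum zero. *)

Lemma perm_eq_map_in_preimage {T1 T2 : eqType} {f : T1 -> T2} {S : seq T1}
    {s' : seq T2} :
  {in S &, injective f} -> perm_eq s' (map f S) ->
  exists2 s, perm_eq s S & s' = map f s.
Proof.
case: S => [|x0 S0] injf ps'; first by exists [::]; last exact/perm_nilP.
set S := x0 :: S0 in injf ps' *.
pose g y := nth x0 S (index y (map f S)).
have fgK y : y \in map f S -> f (g y) = y.
  by move=> yS; rewrite /g -(nth_map x0 (f x0)) ?nth_index // -(size_map f) index_mem.
have gfK : {in S, cancel f g}.
  move=> x xS; apply: injf => //; last by rewrite fgK ?map_f.
  by rewrite /g mem_nth // -(size_map f) index_mem map_f.
exists (map g s'); last first.
  by rewrite -map_comp map_id_in // => y; rewrite (perm_mem ps') => /fgK.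
by rewrite (perm_trans (perm_map g ps')) // -map_comp (map_id_in gfK).
Qed.

Section Sequencings.
Context {G : zmodType}.
Implicit Types s : seq G.

Lemma last_scanl_add s a : last a (scanl +%R a s) = a + \sum_(x <- s) x.
Proof.
elim: s a => [|x s IHs] a /=; first by rewrite big_nil addr0.
by rewrite IHs big_cons addrA.
Qed.

Lemma nth_partial_sums_size s : nth 0 (partial_sums s) (size s) = \sum_(x <- s) x.
Proof.
rewrite /partial_sums -[in nth _ _ (size s)](size_scanl +%R 0 s).
by rewrite nth_last /= last_scanl_add add0r.
Qed.

Lemma nonzero_sum_not_rot_sequencing s :
  nonzero_sum s -> ~~ is_rot_sequencing s.
Proof.
move=> sum_s; apply/negP => /and3P[_ sum0 _].
by move: sum_s; rewrite /nonzero_sum -nth_partial_sums_size sum0.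
Qed.

End Sequencings.

Section AdditivePullback.
Context {G1 G2 : zmodType} (f : {additive G1 -> G2}).

Lemma partial_sums_map (s : seq G1) :
  partial_sums (map f s) = map f (partial_sums s).
Proof.
rewrite /partial_sums /= -(raddf0 f); congr (_ :: _).
by elim: s 0 => [|x s IHs] a //=; rewrite -raddfD IHs.
Qed.

Lemma is_sequencing_map (s : seq G1) : is_sequencing (map f s) -> is_sequencing s.
Proof. by rewrite /is_sequencing partial_sums_map => /map_uniq. Qed.

Lemma sequenceable_pullback (S : seq G1) :
  {in S &, injective f} -> nonzero_sum (map f S) -> sequenceable (map f S) ->
  sequenceable S.
Proof.
move=> injf sumfS [s' [ps' [seq_s' | rot_s']]]; last first.
  have sum_s' : nonzero_sum s' by rewrite /nonzero_sum (perm_big _ ps').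
  by rewrite (negPf (nonzero_sum_not_rot_sequencing _ sum_s')) in rot_s'.
have [s ps def_s'] := perm_eq_map_in_preimage injf ps'.
by exists s; split; last by left; apply: is_sequencing_map; rewrite -def_s'.
Qed.

End AdditivePullback.

Definition map_fst {U V W : Type} (f : U -> V) (x : U * W) : V * W := (f x.1, x.2).

Section MapFstAdditive.
Variables (U V W : zmodType) (f : {additive U -> V}).

Lemma map_fst_is_zmod_morphism : zmod_morphism (@map_fst U V W f).
Proof. by move=> [u a] [v b]; rewrite /map_fst /= raddfB. Qed.

HB.instance Definition _ :=
  GRing.isZmodMorphism.Build (U * W)%type (V * W)%type (@map_fst U V W f)
    map_fst_is_zmod_morphism.

End MapFstAdditive.

Definition eval_row {R : nzRingType} {n : nat} (c : R) (v : 'rV[R]_n) : R :=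
  (rVpoly v).[c].

Section RowEvaluation.
Variables (R : nzRingType) (n : nat) (c : R).

Lemma eval_row_is_zmod_morphism : zmod_morphism (@eval_row R n c).
Proof. by move=> u v; rewrite /eval_row raddfB hornerD hornerN. Qed.

HB.instance Definition _ :=
  GRing.isZmodMorphism.Build 'rV[R]_n R (eval_row c) eval_row_is_zmod_morphism.

End RowEvaluation.

Lemma exists_nonroot {R : numDomainType} {p : {poly R}} :
  p != 0 -> exists c : R, ~~ root p c.
Proof.
move=> p_neq0.
pose cs := [seq i%:R : R | i <- iota 0 (size p)].
have /allPn[c _ not_root] : ~~ all (root p) cs.
  apply/negP => /(max_poly_roots p_neq0).
  rewrite map_inj_uniq ?iota_uniq => [|i j /eqP]; last by rewrite eqr_nat => /eqP.
  by rewrite size_map size_iota ltnn => /(_ isT).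
by exists c.
Qed.

Lemma exists_injective_eval_row {R : numDomainType} {n : nat} (A : seq 'rV[R]_n) :
  exists c : R, {in A &, injective (eval_row c)}.
Proof.
pose P := \prod_(u <- A) \prod_(w <- A | u != w) rVpoly (u - w).
have rVpolyB_neq0 (u w : 'rV[R]_n) : u != w -> rVpoly (u - w) != 0.
  apply: contra => /eqP rVpoly_eq0.
  by rewrite -subr_eq0 -[u - w]rVpolyK rVpoly_eq0 raddf0.
have P_neq0 : P != 0.
  rewrite prodf_seq_neq0; apply/allP => u _ /=.
  by rewrite prodf_seq_neq0; apply/allP => w _; apply/implyP/rVpolyB_neq0.
have [c P_c_neq0] := exists_nonroot P_neq0.
exists c => u w uA wA eq_uw; apply/eqP; apply: contraNT P_c_neq0 => neq_uw.
rewrite /root horner_prod prodf_seq_eq0; apply/hasP; exists u => //=.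
rewrite horner_prod prodf_seq_eq0; apply/hasP; exists w => //=.
have eval_rowB : eval_row c (u - w) = 0 by rewrite raddfB /= eq_uw subrr.
by rewrite neq_uw; apply/eqP; exact: eval_rowB.
Qed.

Theorem proposition4p3 (H : finZmodType) (t : nat) (h : 'I_t -> H)
  (h_bij : bijective h) (h_0 : forall i : 'I_t, nat_of_ord i = 0%N -> h i = 0)
  (lam : 'I_t -> nat) :
  (forall S : seq (int * H),
      uniq S -> 0 \notin S -> nonzero_sum S -> has_type h lam S ->
      sequenceable S) ->
  forall n : nat, (2 <= n)%N ->
  forall S : seq ('rV[int]_n * H),
      uniq S -> 0 \notin S -> nonzero_sum S -> has_type h lam S ->
      sequenceable S.
Proof.
move=> seqZH n _ S uniqS S_0 sumS typeS.
pose A := 0 :: \sum_(x <- S) x :: S.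
have [c inj_c] := exists_injective_eval_row [seq x.1 | x <- A].
pose F := @map_fst 'rV[int]_n int H (eval_row c).
have injF : {in A &, injective F}.
  by move=> [u a] [w b] /(map_f fst) uA /(map_f fst) wA [/inj_c -> // ->].
have injF0 x : x \in A -> F x = 0 -> x = 0.
  by move=> xA; rewrite -(raddf0 F) => /injF ->; rewrite ?mem_head.
have subSA : {subset S <= A} by move=> x xS; rewrite !inE xS !orbT.
have sumSA : \sum_(x <- S) x \in A by rewrite !inE eqxx orbT.
have injFS := sub_in2 subSA injF.
have sumFS : nonzero_sum (map F S).
  rewrite /nonzero_sum big_map -raddf_sum; apply: contra sumS.
  by move=> /eqP/(injF0 _ sumSA)->.
apply: (@sequenceable_pullback _ _ F S injFS sumFS); apply: seqZH => //.
- by rewrite map_inj_in_uniq.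
- apply/mapP => -[x xS /esym/(injF0 x (subSA x xS)) x_0].
  by rewrite -x_0 xS in S_0.
- by move=> i; rewrite count_map; exact: typeS.
Qed.
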